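(* Let $f(x) = a_3x^3 + a_2x^2 + a_1x + a_0$ be a real polynomial with $a_3 > 0$ and $a_2^2 - 3a_1a_3 \geq 0$. Consider the condition $(\dagger)$: $\frac{-2a_2^3 + 9a_1a_2a_3 - 2(a_2^2 - 3a_1a_3)^{3/2}}{27a_3^2} \leq a_0 \leq \frac{-2a_2^3 + 9a_1a_2a_3 + 2(a_2^2 - 3a_1a_3)^{3/2}}{27a_3^2}$. Then: (1) all complex roots of $f(x)$ are real and non-negative if and only if $a_2 \leq 0$, $0 \leq a_1 \leq \frac{a_2^2}{3a_3}$, $a_0 \leq 0$ and $(\dagger)$ holds; (2) all complex roots of $f(x)$ are real and positive if and only if $a_2 < 0$, $0 < a_1 \leq \frac{a_2^2}{3a_3}$, $a_0 < 0$ and $(\dagger)$ holds.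
   Context: For a non-negative real $r$, $r^{3/2}$ denotes the non-negative real number $(\sqrt{r})^3$. *)

(* R is a real closed field (e.g. the reals); complex R = R[i]
   is its algebraic closure (mathcomp-real-closed). *)
From mathcomp Require Import all_boot all_order all_algebra.
From mathcomp Require Export complex.
Set Implicit Arguments. Unset Strict Implicit. Unset Printing Implicit Defensive.
Import Order.TTheory GRing.Theory Num.Theory.
Local Open Scope ring_scope.

Definition cubic (R : nzRingType) (a3 a2 a1 a0 : R) : {poly R} :=
  a3 *: 'X^3 + a2 *: 'X^2 + a1 *: 'X + a0%:P.

Definition pow32 (R : rcfType) (r : R) : R := (Num.sqrt r) ^+ 3.

Definition dagger (R : rcfType) (a3 a2 a1 a0 : R) : Prop :=
  (- 2 * a2 ^+ 3 + 9 * a1 * a2 * a3 - 2 * pow32 (a2 ^+ 2 - 3 * a1 * a3))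
      / (27 * a3 ^+ 2) <= a0 /\
  a0 <= (- 2 * a2 ^+ 3 + 9 * a1 * a2 * a3 + 2 * pow32 (a2 ^+ 2 - 3 * a1 * a3))
      / (27 * a3 ^+ 2).

Definition all_roots_real_and (R : rcfType) (p : {poly R}) (P : R -> bool) : Prop :=
  forall z : R[i], root (map_poly (real_complex R) p) z ->
    complex.Im z = 0 /\ P (complex.Re z).

(* Condition (dagger) says exactly that the discriminant D of f is nonnegative,
   because 27 a3^2 D = 4 (a2^2 - 3 a1 a3)^3 - (27 a3^2 a0 + 2 a2^3 - 9 a1 a2 a3)^2
   and 27 a3^2 > 0.
   If the roots r, s, t of f are all real, Vieta's formulas give the sign
   conditions on the coefficients and D = a3^4 ((r - s) (s - t) (r - t))^2 >= 0.
   Conversely a non-real root u + i v would force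
   D = - 4 v^2 ((a2 + 3 a3 u)^2 + a3^2 v^2)^2 < 0, so D >= 0 makes every root
   real; the sign pattern of the coefficients then rules out real roots x < 0
   (resp. x <= 0), where every term of f(x) is nonpositive and one is negative. *)

From mathcomp Require Import all_boot all_order all_algebra.
From mathcomp Require Import complex.
From mathcomp.algebra_tactics Require Import ring lra.
Import Order.TTheory GRing.Theory Num.Theory.
Local Open Scope ring_scope.

Set Implicit Arguments.
Unset Strict Implicit.
Unset Printing Implicit Defensive.

Section CubicPolynomial.
Variable R : comNzRingType.

Lemma cubicE (a3 a2 a1 a0 : R) : cubic a3 a2 a1 a0 = Poly [:: a0; a1; a2; a3].
Proof. by rewrite /cubic /= !cons_poly_def mul0r add0r -!mul_polyC; ring. Qed.

Lemma cubic_polyseq (a3 a2 a1 a0 : R) :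
  a3 != 0 -> cubic a3 a2 a1 a0 = [:: a0; a1; a2; a3] :> seq R.
Proof. by move=> a3_neq0; rewrite cubicE (PolyK (c := 0)). Qed.

Lemma size_cubic (a3 a2 a1 a0 : R) : a3 != 0 -> size (cubic a3 a2 a1 a0) = 4.
Proof. by move=> a3_neq0; rewrite cubic_polyseq. Qed.

Lemma lead_coef_cubic (a3 a2 a1 a0 : R) :
  a3 != 0 -> lead_coef (cubic a3 a2 a1 a0) = a3.
Proof. by move=> a3_neq0; rewrite /lead_coef cubic_polyseq. Qed.

Lemma horner_cubic (a3 a2 a1 a0 x : R) :
  (cubic a3 a2 a1 a0).[x] = a3 * x ^+ 3 + a2 * x ^+ 2 + a1 * x + a0.
Proof. by rewrite /cubic !hornerE. Qed.

Lemma cubic_inj (a3 a2 a1 a0 b3 b2 b1 b0 : R) :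
  cubic a3 a2 a1 a0 = cubic b3 b2 b1 b0 ->
  [/\ a3 = b3, a2 = b2, a1 = b1 & a0 = b0].
Proof.
rewrite !cubicE => e.
have coef_eq i : [:: a0; a1; a2; a3]`_i = [:: b0; b1; b2; b3]`_i.
  by have := congr1 (fun p : {poly R} => p`_i) e; rewrite !coef_Poly.
by split; [exact: (coef_eq 3) | exact: (coef_eq 2) | exact: (coef_eq 1)
          | exact: (coef_eq 0)].
Qed.

Lemma scale_cubic_XsubC (a3 r s t : R) :
  a3 *: (('X - r%:P) * ('X - s%:P) * ('X - t%:P)) =
  cubic a3 (- a3 * (r + s + t)) (a3 * (r * s + s * t + r * t))
    (- a3 * (r * s * t)).
Proof. by rewrite /cubic -!mul_polyC; ring. Qed.

Lemma cubic_Vieta (a3 a2 a1 a0 r s t : R) :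
  cubic a3 a2 a1 a0 = a3 *: (('X - r%:P) * ('X - s%:P) * ('X - t%:P)) ->
  [/\ a2 = - a3 * (r + s + t), a1 = a3 * (r * s + s * t + r * t)
    & a0 = - a3 * (r * s * t)].
Proof. by rewrite scale_cubic_XsubC => /cubic_inj[]. Qed.

Lemma map_cubic (S : nzRingType) (f : {rmorphism R -> S}) (a3 a2 a1 a0 : R) :
  map_poly f (cubic a3 a2 a1 a0) = cubic (f a3) (f a2) (f a1) (f a0).
Proof.
by rewrite /cubic !rmorphD /= !map_polyZ !map_polyXn map_polyX map_polyC.
Qed.

Definition cubic_disc (a3 a2 a1 a0 : R) : R :=
  18 * a3 * a2 * a1 * a0 - 4 * a2 ^+ 3 * a0 + a2 ^+ 2 * a1 ^+ 2
  - 4 * a3 * a1 ^+ 3 - 27 * a3 ^+ 2 * a0 ^+ 2.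

Lemma cubic_disc_Vieta (a3 r s t : R) :
  cubic_disc a3 (- a3 * (r + s + t)) (a3 * (r * s + s * t + r * t))
    (- a3 * (r * s * t)) = a3 ^+ 4 * ((r - s) * (s - t) * (r - t)) ^+ 2.
Proof. by rewrite /cubic_disc; ring. Qed.

Lemma cubic_discE (a3 a2 a1 a0 : R) :
  27 * a3 ^+ 2 * cubic_disc a3 a2 a1 a0 =
  4 * (a2 ^+ 2 - 3 * a1 * a3) ^+ 3
  - (27 * a3 ^+ 2 * a0 + 2 * a2 ^+ 3 - 9 * a1 * a2 * a3) ^+ 2.
Proof. by rewrite /cubic_disc; ring. Qed.

End CubicPolynomial.

Section RealRoots.
Variables (R : realDomainType) (a3 a2 a1 a0 x : R).
Hypotheses (a3_gt0 : 0 < a3) (a2_le0 : a2 <= 0) (a1_ge0 : 0 <= a1).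

Let horner_cubicE :
  (cubic a3 a2 a1 a0).[x] = x * (a3 * x ^+ 2 + a2 * x + a1) + a0.
Proof. by rewrite horner_cubic; ring. Qed.

Lemma cubic_root_ge0 : a0 <= 0 -> root (cubic a3 a2 a1 a0) x -> 0 <= x.
Proof.
move=> a0_le0; apply: contraLR; rewrite -ltNge => x_lt0.
have a3x2_gt0 : 0 < a3 * x ^+ 2.
  by rewrite mulr_gt0 // exprn_even_gt0 // ltr0_neq0.
have a2x_ge0 : 0 <= a2 * x by rewrite mulr_le0 // ltW.
have q_gt0 : 0 < a3 * x ^+ 2 + a2 * x + a1 by rewrite -addrA ltr_pwDl // addr_ge0.
by rewrite /root horner_cubicE lt_eqF // ltr_wnDr // nmulr_rlt0.
Qed.

Lemma cubic_root_gt0 : a0 < 0 -> root (cubic a3 a2 a1 a0) x -> 0 < x.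
Proof.
move=> a0_lt0; apply: contraLR; rewrite -leNgt => x_le0.
have a3x2_ge0 : 0 <= a3 * x ^+ 2 by rewrite mulr_ge0 ?sqr_ge0 ?ltW.
have a2x_ge0 : 0 <= a2 * x by rewrite mulr_le0.
have q_ge0 : 0 <= a3 * x ^+ 2 + a2 * x + a1 by rewrite !addr_ge0.
by rewrite /root horner_cubicE lt_eqF // ltr_wnDl // mulr_le0_ge0.
Qed.

End RealRoots.

Lemma ler_sqr_between (R : realDomainType) (x y : R) :
  0 <= y -> (x ^+ 2 <= y ^+ 2) = (- y <= x <= y).
Proof.
by move=> y_ge0; rewrite -ler_norml -real_normK ?num_real // ler_sqr ?nnegrE.
Qed.

Section RealClosed.
Variable R : rcfType.
Local Open Scope complex_scope.

Lemma dagger_iff_disc_ge0 (a3 a2 a1 a0 : R) :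
  0 < a3 -> 0 <= a2 ^+ 2 - 3 * a1 * a3 ->
  dagger a3 a2 a1 a0 <-> 0 <= cubic_disc a3 a2 a1 a0.
Proof.
move=> a3_gt0 D0_ge0; pose S := pow32 (a2 ^+ 2 - 3 * a1 * a3).
have S_ge0 : 0 <= S by rewrite exprn_ge0 ?sqrtr_ge0.
have S2 : S ^+ 2 = (a2 ^+ 2 - 3 * a1 * a3) ^+ 3.
  by rewrite /S /pow32 -exprM mulnC exprM sqr_sqrtr.
have k_gt0 : 0 < 27 * a3 ^+ 2 by rewrite mulr_gt0 ?exprn_gt0.
rewrite -(pmulr_rge0 _ k_gt0) cubic_discE -S2 subr_ge0.
have -> : 4 * S ^+ 2 = (2 * S) ^+ 2 by ring.
rewrite ler_sqr_between; last exact: mulr_ge0.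
rewrite /dagger -/S !ler_pdivrMr // !ler_pdivlMr //.
by split=> [[lo hi]|/andP[lo hi]]; [apply/andP; split | split]; lra.
Qed.

Lemma horner_cubic_complex (a3 a2 a1 a0 u v : R) :
  (map_poly (real_complex R) (cubic a3 a2 a1 a0)).[u +i* v] =
  (a3 * (u ^+ 3 - 3 * u * v ^+ 2) + a2 * (u ^+ 2 - v ^+ 2) + a1 * u + a0)
  +i* (v * (a3 * (3 * u ^+ 2 - v ^+ 2) + 2 * a2 * u + a1)).
Proof.
by rewrite map_cubic horner_cubic !exprS expr0; simpc; congr (_ +i* _); ring.
Qed.

Lemma cubic_disc_nonreal_root (a3 a2 a1 a0 u v : R) : v != 0 ->
  root (map_poly (real_complex R) (cubic a3 a2 a1 a0)) (u +i* v) ->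
  cubic_disc a3 a2 a1 a0 =
  - 4 * v ^+ 2 * ((a2 + 3 * a3 * u) ^+ 2 + a3 ^+ 2 * v ^+ 2) ^+ 2.
Proof.
move=> v_neq0; rewrite /root horner_cubic_complex => /eqP[re0 /eqP].
rewrite mulf_eq0 (negbTE v_neq0) => /eqP im0.
have a1E : a1 = - a3 * (3 * u ^+ 2 - v ^+ 2) - 2 * a2 * u by lra.
have a0E : a0 =
    - (a3 * (u ^+ 3 - 3 * u * v ^+ 2) + a2 * (u ^+ 2 - v ^+ 2) + a1 * u) by lra.
by rewrite /cubic_disc a0E a1E; ring.
Qed.

Lemma cubic_root_real (a3 a2 a1 a0 : R) (z : R[i]) :
  a3 != 0 -> 0 <= cubic_disc a3 a2 a1 a0 ->
  root (map_poly (real_complex R) (cubic a3 a2 a1 a0)) z -> z = (complex.Re z)%:C.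
Proof.
case: z => u v a3_neq0 disc_ge0 root_uv /=; congr (_ +i* _); apply/eqP.
apply: contraTT disc_ge0 => v_neq0.
rewrite (cubic_disc_nonreal_root v_neq0 root_uv) -ltNge !mulNr oppr_lt0.
have sum_gt0 : 0 < (a2 + 3 * a3 * u) ^+ 2 + a3 ^+ 2 * v ^+ 2.
  by rewrite ltr_wpDl ?sqr_ge0 // mulr_gt0 ?exprn_even_gt0.
by rewrite mulr_gt0 ?exprn_gt0 // mulr_gt0 ?exprn_even_gt0.
Qed.

Lemma all_roots_real_and_cubic (P : pred R) (a3 a2 a1 a0 : R) :
  a3 != 0 -> 0 <= cubic_disc a3 a2 a1 a0 ->
  (forall x, root (cubic a3 a2 a1 a0) x -> P x) ->
  all_roots_real_and (cubic a3 a2 a1 a0) P.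
Proof.
move=> a3_neq0 disc_ge0 P_roots z root_z.
have zE := cubic_root_real a3_neq0 disc_ge0 root_z.
split; first by rewrite zE.
by apply: P_roots; move: root_z; rewrite zE fmorph_root.
Qed.

Lemma cubic_real_split (P : pred R) (a3 a2 a1 a0 : R) : a3 != 0 ->
  all_roots_real_and (cubic a3 a2 a1 a0) P ->
  exists r s t, [/\ P r, P s, P t &
    cubic a3 a2 a1 a0 = a3 *: (('X - r%:P) * ('X - s%:P) * ('X - t%:P))].
Proof.
move=> a3_neq0 roots; set p := cubic a3 a2 a1 a0.
have [zs p_split] := closed_field_poly_normal (map_poly (real_complex R) p).
rewrite lead_coef_map lead_coef_cubic // in p_split.
have a3C_neq0 : a3%:C != 0 by rewrite fmorph_eq0.
have : (size zs).+1 = 4.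
  rewrite -(size_prod_XsubC _ id) -(size_scale _ a3C_neq0) -p_split.
  by rewrite size_map_poly size_cubic.
case: zs p_split => [|z1 [|z2 [|z3 []]]] // p_split _.
have real_root z : root (map_poly (real_complex R) p) z ->
    z = (complex.Re z)%:C /\ P (complex.Re z).
  by case: z => u v /roots[/= -> P_u].
have /and4P[/real_root[z1E P1] /real_root[z2E P2] /real_root[z3E P3] _] :
    all (root (map_poly (real_complex R) p)) [:: z1; z2; z3].
  by apply/allP => z z_in; rewrite p_split rootZ // root_prod_XsubC.
exists (complex.Re z1), (complex.Re z2), (complex.Re z3); split => //.
apply: (map_poly_inj (real_complex R)).
rewrite p_split map_polyZ !rmorphM !rmorphB /= map_polyX !map_polyC /=.
by rewrite -z1E -z2E -z3E !big_cons big_nil mulr1 mulrA.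
Qed.

End RealClosed.

Theorem proposition3p2 (R : rcfType) (a3 a2 a1 a0 : R) :
  0 < a3 -> 0 <= a2 ^+ 2 - 3 * a1 * a3 ->
  (all_roots_real_and (cubic a3 a2 a1 a0) (fun x => 0 <= x) <->
     [/\ a2 <= 0, 0 <= a1 /\ a1 <= a2 ^+ 2 / (3 * a3), a0 <= 0
       & dagger a3 a2 a1 a0]) /\
  (all_roots_real_and (cubic a3 a2 a1 a0) (fun x => 0 < x) <->
     [/\ a2 < 0, 0 < a1 /\ a1 <= a2 ^+ 2 / (3 * a3), a0 < 0
       & dagger a3 a2 a1 a0]).
Proof.
move=> a3_gt0 D0_ge0; have a3_ge0 := ltW a3_gt0; have a3_neq0 := lt0r_neq0 a3_gt0.
have a1_le : a1 <= a2 ^+ 2 / (3 * a3).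
  by rewrite ler_pdivlMr ?mulr_gt0 // -subr_ge0 mulrA (mulrC a1).
have dagger_disc := dagger_iff_disc_ge0 a0 a3_gt0 D0_ge0.
split; split.
- move=> /(cubic_real_split a3_neq0) [r [s [t [r_ge0 s_ge0 t_ge0]]]].
  move=> /cubic_Vieta[a2E a1E a0E].
  split; [| split=> // | | apply/dagger_disc]; subst a2 a1 a0.
  + by rewrite mulNr oppr_le0 mulr_ge0 ?addr_ge0.
  + by rewrite mulr_ge0 ?addr_ge0 ?mulr_ge0.
  + by rewrite mulNr oppr_le0 !mulr_ge0.
  + by rewrite cubic_disc_Vieta mulr_ge0 ?sqr_ge0 ?exprn_ge0.
- case=> a2_le0 [a1_ge0 _] a0_le0 /dagger_disc disc_ge0.
  by apply: all_roots_real_and_cubic => // x; apply: cubic_root_ge0.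
- move=> /(cubic_real_split a3_neq0) [r [s [t [r_gt0 s_gt0 t_gt0]]]].
  move=> /cubic_Vieta[a2E a1E a0E].
  split; [| split=> // | | apply/dagger_disc]; subst a2 a1 a0.
  + by rewrite mulNr oppr_lt0 mulr_gt0 ?addr_gt0.
  + by rewrite mulr_gt0 ?addr_gt0 ?mulr_gt0.
  + by rewrite mulNr oppr_lt0 !mulr_gt0.
  + by rewrite cubic_disc_Vieta mulr_ge0 ?sqr_ge0 ?exprn_ge0.
- case=> a2_lt0 [a1_gt0 _] a0_lt0 /dagger_disc disc_ge0.
  by apply: all_roots_real_and_cubic => // x; apply: cubic_root_gt0; rewrite ?ltW.
Qed.
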